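(* For all integers $r\ge1$, $1\le l\le r$ and $0\le z\le q\le r$, $$ r\sum_{m=0}^{z}\binom{l-1}{m}\binom{r-l}{q-m-1}\;\ge\; q\sum_{m=0}^{z}\binom{l-1}{m}\binom{r-l+1}{q-m}. $$
   Context: Binomial coefficients $\binom{a}{b}$ are taken to be $0$ when $b<0$ or $b>a$. *)

From mathcomp Require Import all_boot all_order all_algebra.
Set Implicit Arguments. Unset Strict Implicit. Unset Printing Implicit Defensive.

(* Binomial coefficient with natural top and integer bottom index:
   binz n k = 'C(n, k) for k >= 0, and 0 for k < 0 (convention of the paper).
   ('C(n,k) = 0 for k > n already.) *)
Definition binz (n : nat) (k : int) : nat :=
  match k with
  | Posz k' => 'C(n, k')
  | Negz _ => 0
  end.

From mathcomp Require Import all_boot all_order all_algebra zify ring.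

(* Put a = l - 1 and b = r - l, so that r = a + b + 1, and
   compare termwise the two sums, extended to the full range 0 <= m <= q:
     lower m = r * C(a, m) * C(b, q - m - 1),   upper m = q * C(a, m) * C(b + 1, q - m).
   (1) By Vandermonde's identity the full sums are r * C(a + b, q - 1) and
       q * C(a + b + 1, q), which agree since r = a + b + 1.
   (2) Writing d = q - m, the identity (b + 1) C(b, d - 1) = d C(b + 1, d) shows
       that lower m : upper m has the sign of r d : q (b + 1); as d decreases
       with m, once a term of [upper] exceeds the corresponding term of [lower],
       this persists for all larger indices ("single crossing").
   (3) A general counting lemma: if two sequences with equal total cross only
       once in this sense, every initial partial sum of the eventually larger
       one is bounded by that of the other.  Applied to the initial range
       m <= z this is the theorem. *)

Lemma single_crossing_partial_sums (f g : nat -> nat) (n z : nat) :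
  z <= n ->
  \sum_(0 <= m < n) f m = \sum_(0 <= m < n) g m ->
  (forall m m', m < m' < n -> f m < g m -> f m' <= g m') ->
  \sum_(0 <= m < z) g m <= \sum_(0 <= m < z) f m.
Proof.
move=> zn balanced crossing.
have [/existsP [[m /= mz] fm_lt_gm]|] := boolP [exists m : 'I_z, f m < g m].
  have tail_le : \sum_(z <= m < n) f m <= \sum_(z <= m < n) g m.
    rewrite big_nat [X in _ <= X]big_nat; apply: leq_sum => i /andP[zi iN].
    by apply: (crossing m) => //; rewrite iN (leq_trans mz zi).
  move: balanced; rewrite !(@big_cat_nat _ _ _ z 0 n) //=.
  lia.
rewrite negb_exists => /forallP g_le_f.
rewrite big_nat [X in _ <= X]big_nat; apply: leq_sum => i /andP[_ iz].
by have := g_le_f (Ordinal iz); rewrite /= -leqNgt.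
Qed.

Lemma binz_neg (n : nat) (k : int) : (k < 0)%R -> binz n k = 0.
Proof. by case: k. Qed.

Lemma binz_subn (n q m : nat) : m <= q -> binz n (q%:Z - m%:Z)%R = 'C(n, q - m).
Proof. by move=> mq; rewrite subzn. Qed.

Lemma binz_subSn (n q m : nat) :
  m < q -> binz n (q%:Z - m%:Z - 1)%R = 'C(n, (q - m).-1).
Proof.
move=> mq; have -> : (q%:Z - m%:Z - 1 = (q - m).-1%:Z)%R by lia.
by [].
Qed.

Section Terms.

Variables a b q : nat.

Definition lower_term (m : nat) : nat :=
  (a + b).+1 * ('C(a, m) * binz b (q%:Z - m%:Z - 1)%R).

Definition upper_term (m : nat) : nat :=
  q * ('C(a, m) * binz b.+1 (q%:Z - m%:Z)%R).

Lemma lower_term_last : lower_term q = 0.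
Proof. by rewrite /lower_term binz_neg ?muln0 //; lia. Qed.

(* Step (1): both full sums equal (a + b + 1) C(a + b, q - 1) = q C(a + b + 1, q). *)
Lemma sum_lower_term :
  0 < q -> \sum_(0 <= m < q.+1) lower_term m = (a + b).+1 * 'C(a + b, q.-1).
Proof.
move=> q_gt0; rewrite big_nat_recr //= lower_term_last addn0 -big_distrr /=.
congr (_ * _); rewrite -binomial.Vandermonde prednK // big_mkord.
apply: eq_bigr => i _; rewrite binz_subSn //; congr (_ * 'C(_, _)); lia.
Qed.

Lemma sum_upper_term : \sum_(0 <= m < q.+1) upper_term m = q * 'C(a + b.+1, q).
Proof.
rewrite -big_distrr /= -binomial.Vandermonde big_mkord.
by congr (_ * _); apply: eq_bigr => i _; rewrite binz_subn // -ltnS.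
Qed.

Lemma sums_balanced :
  \sum_(0 <= m < q.+1) lower_term m = \sum_(0 <= m < q.+1) upper_term m.
Proof.
case: (posnP q) => [q0 | q_gt0].
  have := lower_term_last.
  by rewrite !big_nat_recr //= !big_geq ?q0 // => ->; rewrite /upper_term q0.
by rewrite sum_lower_term // sum_upper_term addnS mul_bin_diag prednK.
Qed.

(* Step (2): multiplied by d = q - m, both terms share the factor
   C(a, m) C(b, d - 1), leaving r d against q (b + 1). *)
Lemma scaled_terms (m : nat) : m < q ->
  let w := 'C(a, m) * 'C(b, (q - m).-1) in
  (q - m) * lower_term m = w * ((a + b).+1 * (q - m)) /\
  (q - m) * upper_term m = w * (q * b.+1).
Proof.
move=> mq w; rewrite /lower_term /upper_term binz_subSn // (binz_subn _ _ _ (ltnW mq)).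
have pascal : b.+1 * 'C(b, (q - m).-1) = (q - m) * 'C(b.+1, q - m).
  by rewrite mul_bin_diag prednK // subn_gt0.
rewrite /w; move: pascal; move: (q - m) ('C(a, m)) ('C(b, _)) ('C(b.+1, _)).
move=> d x y u pascal; split; first by ring.
have -> : d * (q * (x * u)) = q * x * (d * u) by ring.
by rewrite -pascal; ring.
Qed.

Lemma lower_lt_upper (m : nat) :
  m < q -> lower_term m < upper_term m -> (a + b).+1 * (q - m) < q * b.+1.
Proof.
move=> mq; have [scl scu] := scaled_terms m mq.
have d_gt0 : 0 < q - m by rewrite subn_gt0.
by rewrite -(ltn_pmul2l d_gt0) scl scu ltn_mul2l => /andP[].
Qed.

Lemma lower_le_upper (m : nat) :
  m < q -> (a + b).+1 * (q - m) <= q * b.+1 -> lower_term m <= upper_term m.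
Proof.
move=> mq le_rd; have [scl scu] := scaled_terms m mq.
have d_gt0 : 0 < q - m by rewrite subn_gt0.
by rewrite -(leq_pmul2l d_gt0) scl scu leq_mul2l le_rd orbT.
Qed.

(* Since r (q - m) decreases with m, the terms cross at most once. *)
Lemma terms_cross_once (m m' : nat) :
  m < m' < q.+1 -> lower_term m < upper_term m -> lower_term m' <= upper_term m'.
Proof.
move=> /andP[mm' m'q] /(lower_lt_upper m (leq_trans mm' m'q)) lt_rd.
have [m'_lt_q | q_le_m'] := ltnP m' q; last first.
  have -> : m' = q by lia.
  by rewrite lower_term_last.
apply: lower_le_upper => //; apply: leq_trans (ltnW lt_rd).
by rewrite leq_mul2l (leq_sub2l _ (ltnW mm')) orbT.
Qed.

End Terms.

Theorem lemma4p3 (r l z q : nat) :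
  1 <= r -> 1 <= l -> l <= r -> z <= q -> q <= r ->
  r * (\sum_(0 <= m < z.+1) 'C(l - 1, m) * binz (r - l) (q%:Z - m%:Z - 1)%R)
  >= q * (\sum_(0 <= m < z.+1) 'C(l - 1, m) * binz (r - l + 1) (q%:Z - m%:Z)%R).
Proof.
move=> r_gt0 l_gt0 lr zq qr.
set a := l - 1; set b := r - l.
have -> : r = (a + b).+1 by rewrite /a /b; lia.
rewrite addn1 !big_distrr /=.
apply: (@single_crossing_partial_sums (lower_term a b q) (upper_term a b q) q.+1).
- exact: zq.
- exact: sums_balanced.
- exact: terms_cross_once.
Qed.
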